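(* For every odd integer $n\ge 3$ and every positive divisor $\lambda$ of $n$, there exists a ${}^\lambda\mathrm{H}_{n/\lambda}(n;3)$.
   Context: For positive integers $m,n,s,k,\lambda,t$ with $t$ dividing $\frac{2nk}{\lambda}$, let $v=\frac{2nk}{\lambda}+t$ and $J$ the subgroup of $\mathbb{Z}_v$ of order $t$. A ${}^\lambda\mathrm{H}_t(m,n;s,k)$ is an $m\times n$ partially filled array with entries in $\mathbb{Z}_v$ such that: (a) each row has exactly $s$ and each column exactly $k$ filled cells; (b) the multiset $\{\pm x: x$ an entry of a filled cell$\}$ contains each element of $\mathbb{Z}_v\setminus J$ exactly $\lambda$ times and no element of $J$; (c) every row and every column sums to $0$ in $\mathbb{Z}_v$. When $m=n$ (so $s=k$) it is denoted ${}^\lambda\mathrm{H}_t(n;k)$. *)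

From mathcomp Require Import all_boot all_order.
Unset Printing Implicit Defensive.

Definition hv (lam t n k : nat) : nat := (2 * n * k) %/ lam + t.

(* An m x n partially filled array with entries in Z_v, represented by
   residues 0 <= x < v ('I_v); None = empty cell.  Arithmetic is mod v. *)
Definition parray (m n v : nat) := 'I_m -> 'I_n -> option 'I_v.

Definition filled {m n v} (A : parray m n v) i j : bool := A i j != None.

Definition entry {m n v} (A : parray m n v) i j : nat :=
  if A i j is Some x then val x else 0.

(* J = the (unique) subgroup of Z_v of order t, i.e. the multiples of v/t *)
Definition inJ (v t y : nat) : bool := (v %/ t) %| y.

(* number of occurrences of y in the multiset {+-x : x an entry} *)
Definition pm_count {m n v} (A : parray m n v) (y : nat) : nat :=
  \sum_(i < m) \sum_(j < n)
     (if A i j is Some x then ((val x == y %% v) : nat) + (((val x + y) %% v == 0) : nat)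
      else 0).

Definition is_heffter (lam t m n s k : nat) (A : parray m n (hv lam t n k)) : Prop :=
  let v := hv lam t n k in
  [/\ lam %| 2 * n * k /\ t %| (2 * n * k) %/ lam,
      (forall i : 'I_m, #|[set j : 'I_n | filled A i j]| = s),
      (forall j : 'I_n, #|[set i : 'I_m | filled A i j]| = k),
      (forall y : nat, y < v ->
         pm_count A y = (if inJ v t y then 0 else lam)) /\
      (forall i : 'I_m, (\sum_(j < n) entry A i j) %% v = 0)
    & (forall j : 'I_n, (\sum_(i < m) entry A i j) %% v = 0)].

Definition is_heffter_sq (lam t n k : nat) (A : parray n n (hv lam t n k)) : Prop :=
  is_heffter lam t n n k k A.

(* Construction (a cyclic band): cell (i,j) of the n x n array is filled iff
   d = j - i (mod n) lies in {0,1,2}, and then holds c_d + 7 k_d j (mod v),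
   where (c_0,k_0) = (1,1), (c_1,k_1) = (2,2t-2) and (c_2,k_2) = (-3,1).
   - Every row and every column meets the band in exactly 3 cells.
   - Column j sums to 7t(2j+1) and row i to 7t(2i+3); in a row the column
     index i+d is reduced mod n, which is harmless as t divides n.
   - Every k_d is coprime to t (t is odd), so when j runs over the n = lam t
     columns, c_d + 7 k_d j hits each residue of Z_v that is congruent to c_d
     modulo 7 exactly lam times.  As {+-1, +-2, +-4} are the six nonzero
     residues mod 7, the entries and their negatives cover every element of
     Z_v outside 7Z_v (the subgroup J of order t) exactly lam times. *)

From mathcomp Require Import all_boot all_order all_algebra zify.
Import GRing.Theory.

Set Implicit Arguments.
Unset Strict Implicit.

(* For y < v, "x is y modulo v" is a divisibility statement without truncation. *)
Lemma modn_eq_dvd x y v : y < v -> (x %% v == y) = (v %| x + (v - y)).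
Proof.
move=> lt_yv; rewrite -{1}(modn_small lt_yv) -(eqn_modDr (v - y)) subnKC ?modnn //.
exact: ltnW.
Qed.

Lemma dvdn_addsub_eqmod m v c y : m %| v -> y <= v ->
  (m %| c + (v - y)) = (c == y %[mod m]).
Proof.
move=> dvd_mv le_yv.
have ->: (m %| c + (v - y)) = (c + (v - y) + y == 0 + y %[mod m]).
  by rewrite eqn_modDr mod0n.
by rewrite -addnA subnK // add0n -modnDmr (eqP dvd_mv) addn0.
Qed.

Lemma coprime_mul_mod_inj k t a b : coprime k t -> a < t -> b < t ->
  k * a = k * b %[mod t] -> a = b.
Proof.
move=> cop lt_at lt_bt.
wlog le_ab : a b lt_at lt_bt / a <= b => [hwlog|].
  case: (leqP a b) => [le_ab | /ltnW le_ba] eq_ab; first exact: hwlog.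
  exact: esym (hwlog b a lt_bt lt_at le_ba (esym eq_ab)).
move/esym/eqP; rewrite eqn_mod_dvd ?leq_mul2l ?le_ab ?orbT //.
rewrite -mulnBr Gauss_dvdr 1?coprime_sym // => dvd_ba.
apply/eqP; rewrite eqn_leq le_ab -subn_eq0; apply: contraLR dvd_ba.
by rewrite -lt0n => ba_gt0; rewrite gtnNdvd //; lia.
Qed.

Lemma count_dvd_period t w k : 0 < t -> coprime k t ->
  \sum_(j < t) (t %| w + k * j : nat) = 1.
Proof.
move=> t_gt0 cop.
pose r (j : 'I_t) := Ordinal (ltn_pmod (w + k * j) t_gt0).
have r_inj : injective r.
  move=> a b /(congr1 val) /= /eqP; rewrite eqn_modDl => /eqP eq_ab.
  exact/val_inj/(coprime_mul_mod_inj cop (ltn_ord a) (ltn_ord b) eq_ab).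
transitivity (\sum_(j < t) (val (r j) == 0 : nat)); first by [].
rewrite -(reindex_inj (P := xpredT) (F := fun x : 'I_t => (val x == 0) : nat) r_inj) /=.
case: t t_gt0 {cop r r_inj} => // t _.
by rewrite big_ord_recl big1.
Qed.

Lemma count_dvd_progression t N w k : 0 < t -> coprime k t -> t %| N ->
  \sum_(j < N) (t %| w + k * j : nat) = N %/ t.
Proof.
move=> t_gt0 cop /dvdnP[q ->]; rewrite mulnK //.
elim: q => [|q IHq]; first by rewrite big_ord0.
rewrite mulSnr big_split_ord /= IHq -addn1; congr (_ + _).
rewrite -(count_dvd_period w t_gt0 cop); apply: eq_bigr => j _ /=.
by rewrite mulnDr addnCA dvdn_addr // mulnA dvdn_mull.
Qed.

Lemma count_dvd_scaled m t N w k : 0 < m -> 0 < t -> coprime k t -> t %| N ->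
  \sum_(j < N) (m * t %| w + m * k * j : nat) = if m %| w then N %/ t else 0.
Proof.
move=> m_gt0 t_gt0 cop dvd_tN; case: ifP => [/dvdnP[w' ->] | ndvd_mw].
  rewrite -(count_dvd_progression w' t_gt0 cop dvd_tN); apply: eq_bigr => j _.
  by rewrite -mulnA -[w' * m]mulnC -mulnDr dvdn_pmul2l.
rewrite big1 // => j _; apply/eqP; rewrite eqb0; apply: contraFN ndvd_mw.
by move/(dvdn_trans (dvdn_mulr t (dvdnn m))); rewrite dvdn_addl // -mulnA dvdn_mulr.
Qed.

Lemma sum_ord_below N w (G : nat -> nat) : w <= N.+1 ->
  \sum_(x : 'I_N.+1) (if x < w then G x else 0) = \sum_(d < w) G d.
Proof. by move=> le_wN; rewrite (big_ord_widen _ _ le_wN) [RHS]big_mkcond. Qed.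

Lemma sum_band_row N w (i : 'I_N.+1) (F : nat -> 'I_N.+1 -> nat) : w <= N.+1 ->
  \sum_(j : 'I_N.+1) (if val (j - i)%R < w then F (val (j - i)%R) j else 0)
  = \sum_(d < w) F d (i + inZp d)%R.
Proof.
move=> le_wN; rewrite (reindex_inj (addrI i)).
rewrite -(sum_ord_below (fun d => F d (i + inZp d)%R) le_wN).
by apply: eq_bigr => d _; rewrite addrC addKr valZpK.
Qed.

Lemma sum_band_col N w (j : 'I_N.+1) (G : nat -> nat) : w <= N.+1 ->
  \sum_(i : 'I_N.+1) (if val (j - i)%R < w then G (val (j - i)%R) else 0)
  = \sum_(d < w) G d.
Proof.
move=> le_wN; have subK : involutive (fun d : 'I_N.+1 => j - d)%R.
  by move=> d; rewrite opprB addrC subrK.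
rewrite (reindex_inj (inv_inj subK)) -(sum_ord_below G le_wN).
by apply: eq_bigr => d _; rewrite subK.
Qed.

(* The constant term c_d of diagonal d, with -3 represented as 7t - 3. *)
Definition band_shift (t d : nat) : nat :=
  if d == 0 then 1 else if d == 1 then 2 else 7 * t - 3.

(* The six values +-c_d are exactly the nonzero residues mod 7: each y is hit
   once, unless 7 divides y.  Here v - y plays the role of -y. *)
Lemma band_shifts_pm_cover t y : 0 < t -> y <= 7 * t ->
  \sum_(d < 3) ((7 %| band_shift t d + (7 * t - y)) + (7 %| band_shift t d + y) : nat)
  = ~~ (7 %| y).
Proof.
move=> t_gt0 le_y; have shift4 : (7 * t - 3) %% 7 = 4 by lia.
rewrite !big_ord_recr big_ord0 /band_shift /=.
have dvd7_add c : (7 %| c + y) = (7 %| c %% 7 + y %% 7) by rewrite /dvdn modnDm.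
rewrite !dvdn_addsub_eqmod ?dvdn_mulr // !dvd7_add shift4 /dvdn.
have: y %% 7 < 7 by rewrite ltn_pmod.
by case: (y %% 7) => [|[|[|[|[|[|[|r]]]]]]].
Qed.

Definition band_slope (t d : nat) : nat := if d == 1 then 2 * t - 2 else 1.

Definition band_value (t d j : nat) : nat := band_shift t d + 7 * band_slope t d * j.

Lemma band_slope_coprime t d : odd t -> coprime (band_slope t d) t.
Proof.
rewrite /band_slope; case: ifP => _ odd_t; last exact: coprime1n.
case: t odd_t => // t odd_t; rewrite mulnS addKn coprimeMl coprime2n odd_t.
exact: coprimenS.
Qed.

Lemma band_value_mod t n d x : t %| n ->
  band_value t d (x %% n) = band_value t d x %[mod 7 * t].
Proof.
move=> /dvdnP[q ->]; rewrite /band_value {2}(divn_eq x (q * t)) mulnDr addnCA.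
set s := x %/ (q * t).
have ->: 7 * band_slope t d * (s * (q * t)) = band_slope t d * s * q * (7 * t) by nia.
by rewrite modnMDl.
Qed.

Lemma band_col_total t j : 0 < t ->
  \sum_(d < 3) band_value t d j = 7 * t * (2 * j + 1).
Proof.
move=> t_gt0; rewrite !big_ord_recr big_ord0 /band_value /band_shift /band_slope /=.
nia.
Qed.

Lemma band_row_total t i : 0 < t ->
  \sum_(d < 3) band_value t d (i + d) = 7 * t * (2 * i + 3).
Proof.
move=> t_gt0; rewrite !big_ord_recr big_ord0 /band_value /band_shift /band_slope /=.
nia.
Qed.

Definition band_array N t v (v_gt0 : 0 < v) : parray N.+1 N.+1 v := fun i j =>
  if val (j - i)%R < 3
  then Some (Ordinal (ltn_pmod (band_value t (val (j - i)%R) j) v_gt0))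
  else None.

Lemma card_set_sum (T : finType) (P : pred T) :
  #|[set x | P x]| = \sum_x (if P x then 1 else 0).
Proof. by rewrite -sum1_card big_mkcond; apply: eq_bigr => x _; rewrite inE. Qed.

Section BandArray.

Variables (N lam t v : nat).
Hypotheses (v_gt0 : 0 < v) (v_eq : v = 7 * t) (N_eq : N.+1 = lam * t).
Hypotheses (odd_t : odd t) (N_ge3 : 3 <= N.+1).

Local Notation A := (@band_array N t v v_gt0).

Lemma band_t_gt0 : 0 < t.
Proof. by case: t odd_t. Qed.

Lemma band_filled (i j : 'I_N.+1) : filled A i j = (val (j - i)%R < 3).
Proof. by rewrite /filled /band_array; case: ifP. Qed.

Lemma band_entry (i j : 'I_N.+1) :
  entry A i j = if val (j - i)%R < 3 then band_value t (val (j - i)%R) j %% v else 0.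
Proof. by rewrite /entry /band_array; case: ifP. Qed.

Lemma band_row_card (i : 'I_N.+1) : #|[set j | filled A i j]| = 3.
Proof.
rewrite card_set_sum; under eq_bigr do rewrite band_filled.
by rewrite (sum_band_row i (fun _ _ => 1)) ?sum_nat_const ?card_ord.
Qed.

Lemma band_col_card (j : 'I_N.+1) : #|[set i | filled A i j]| = 3.
Proof.
rewrite card_set_sum; under eq_bigr do rewrite band_filled.
by rewrite (sum_band_col j (fun _ => 1)) ?sum_nat_const ?card_ord.
Qed.

Lemma band_col_sum (j : 'I_N.+1) : (\sum_(i < N.+1) entry A i j) %% v = 0.
Proof.
rewrite (eq_bigr _ (fun i _ => band_entry i j)).
rewrite (sum_band_col j (fun d => band_value t d j %% v)) //.
by rewrite modn_summ band_col_total ?band_t_gt0 // v_eq modnMr.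
Qed.

Lemma band_row_sum (i : 'I_N.+1) : (\sum_(j < N.+1) entry A i j) %% v = 0.
Proof.
rewrite (eq_bigr _ (fun j _ => band_entry i j)).
rewrite (sum_band_row i (fun d j => band_value t d j %% v)) //.
have dvd_tN : t %| N.+1 by rewrite N_eq dvdn_mull.
rewrite (eq_bigr (fun d : 'I_3 => band_value t d (i + d) %% v)); last first.
  by move=> d _; rewrite /= modnDmr v_eq (band_value_mod _ _ dvd_tN).
by rewrite modn_summ band_row_total ?band_t_gt0 // v_eq modnMr.
Qed.

Lemma band_diag_pm_count d y : y < v ->
  \sum_(j < N.+1) (((band_value t d j %% v == y %% v) : nat)
                   + (((band_value t d j %% v + y) %% v == 0) : nat))
  = lam * ((7 %| band_shift t d + (7 * t - y)) + (7 %| band_shift t d + y)).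
Proof.
move=> lt_yv; have t_gt0 := band_t_gt0.
have count w : \sum_(j < N.+1) (7 * t %| w + 7 * band_slope t d * j : nat) = lam * (7 %| w).
  rewrite count_dvd_scaled ?band_slope_coprime ?N_eq ?dvdn_mull ?mulnK //.
  by case: (7 %| w); rewrite ?muln1 ?muln0.
rewrite big_split mulnDr -!count; congr (_ + _); apply: eq_bigr => j _.
  by rewrite (modn_small lt_yv) modn_eq_dvd // v_eq /band_value addnAC.
by rewrite modnDml v_eq /band_value addnAC.
Qed.

Lemma band_pm_count y : y < v -> pm_count A y = if inJ v t y then 0 else lam.
Proof.
move=> lt_yv; have t_gt0 := band_t_gt0.
pose hits x := ((x == y %% v) : nat) + (((x + y) %% v == 0) : nat).
rewrite /pm_count exchange_big /=.
rewrite (eq_bigr (fun j : 'I_N.+1 => \sum_(d < 3) hits (band_value t d j %% v))); last first.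
  move=> j _; rewrite -(sum_band_col j (fun d => hits (band_value t d j %% v))) //.
  by apply: eq_bigr => i _; rewrite /band_array; case: ifP.
rewrite exchange_big /= (eq_bigr _ (fun (d : 'I_3) _ => band_diag_pm_count d lt_yv)).
rewrite -big_distrr /=.
have le_y7t : y <= 7 * t by rewrite -v_eq ltnW.
rewrite band_shifts_pm_cover // /inJ v_eq mulnK //.
by case: (7 %| y); rewrite ?muln0 ?muln1.
Qed.

End BandArray.

Theorem proposition4 (n lam : nat) :
  odd n -> 3 <= n -> 0 < lam -> lam %| n ->
  exists A : parray n n (hv lam (n %/ lam) n 3),
    is_heffter_sq lam (n %/ lam) n 3 A.
Proof.
case: n => [//|N] odd_n N_ge3 lam_gt0 /dvdnP[t N_eq].
have t_eq : N.+1 %/ lam = t by rewrite N_eq mulnK.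
have odd_t : odd t by move: odd_n; rewrite N_eq oddM => /andP[].
have t_gt0 : 0 < t by case: t odd_t {N_eq t_eq}.
have six_t : (2 * N.+1 * 3) %/ lam = 6 * t.
  by rewrite N_eq (_ : 2 * (t * lam) * 3 = 6 * t * lam) ?mulnK //; lia.
have v_eq : hv lam t N.+1 3 = 7 * t by rewrite /hv six_t; lia.
have v_gt0 : 0 < hv lam t N.+1 3 by rewrite v_eq; lia.
have N_eq' : N.+1 = lam * t by rewrite mulnC.
rewrite t_eq; exists (band_array t v_gt0); split.
- by split; [rewrite N_eq dvdn_mulr // !dvdn_mull | rewrite six_t dvdn_mull].
- exact: band_row_card.
- exact: band_col_card.
- split=> [y|i]; first exact: (band_pm_count v_gt0 v_eq N_eq').
  exact: (band_row_sum v_gt0 v_eq N_eq').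
- exact: (band_col_sum v_gt0 v_eq).
Qed.
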